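(* Let $L$ be a finite distributive lattice and $x\in L$ a complemented element with complement $x'$. Then $\mathcal C_x(\mathcal J(L))$ is a convex polytope in $\mathbb R^{\mathcal J(L)}$ whose set of vertices (extreme points) is exactly $\mathcal D_x(\mathcal J(L))$.
   Context: $\mathcal J(L)$ is the set of join-irreducible elements of $L$ (elements covering exactly one element) with the induced order; for $y\in L$, $\eta(y):=\{j\in\mathcal J(L): j\le y\}$. Since $x$ is complemented, $\eta(x)$ and $\eta(x')$ partition $\mathcal J(L)$. A map $g$ on $\mathcal J(L)$ is nonincreasing if $j\le j'$ implies $g(j)\ge g(j')$. $\mathcal D_x(\mathcal J(L))$ is the set of maps $\xi:\mathcal J(L)\to\{-1,0,1\}$ such that $|\xi|$ is nonincreasing, $\xi(j)\ge0$ for $j\in\eta(x)$ and $\xi(j)\le0$ for $j\in\eta(x')$. $\mathcal C_x(\mathcal J(L))$ is the set of maps $f:\mathcal J(L)\to[-1,1]$ such that $|f|$ is nonincreasing, $f(j)\ge0$ for $j\in\eta(x)$ and $f(j)\le 0$ for $j\in\eta(x')$. *)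

From HB Require Import structures.
From mathcomp Require Import all_boot all_order all_algebra.
Set Implicit Arguments. Unset Strict Implicit. Unset Printing Implicit Defensive.
Import Order.TTheory GRing.Theory Num.Theory.

Definition covers (d : Order.disp_t) (L : finPOrderType d) (a b : L) : bool :=
  ((a < b)%O && [forall z : L, ~~ ((a < z)%O && (z < b)%O)]).

Definition join_irr (d : Order.disp_t) (L : finPOrderType d) (j : L) : bool :=
  #|[pred y : L | covers y j]| == 1%N.

(* J(L) as a finite type (order on it is the induced order, via val) *)
Definition JL (d : Order.disp_t) (L : finPOrderType d) := {j : L | join_irr j}.

Definition complement_of (d : Order.disp_t) (L : finTBDistrLatticeType d) (x x' : L) : Prop :=
  (x `&` x')%O = \bot%O /\ (x `|` x')%O = \top%O.

Local Open Scope ring_scope.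

Definition abs_nonincr (d : Order.disp_t) (L : finPOrderType d) (R : realFieldType)
  (g : JL L -> R) : Prop :=
  forall j j' : JL L, (val j <= val j')%O -> `|g j'| <= `|g j|.

Definition sign_cond (d : Order.disp_t) (L : finTBDistrLatticeType d) (R : realFieldType)
  (x x' : L) (g : JL L -> R) : Prop :=
  (forall j : JL L, (val j <= x)%O -> 0 <= g j) /\
  (forall j : JL L, (val j <= x')%O -> g j <= 0).

Definition in_Dx (d : Order.disp_t) (L : finTBDistrLatticeType d) (R : realFieldType)
  (x x' : L) (g : JL L -> R) : Prop :=
  (forall j, g j = -1 \/ g j = 0 \/ g j = 1) /\ abs_nonincr g /\ sign_cond x x' g.

Definition in_Cx (d : Order.disp_t) (L : finTBDistrLatticeType d) (R : realFieldType)
  (x x' : L) (g : JL L -> R) : Prop :=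
  (forall j, -1 <= g j <= 1) /\ abs_nonincr g /\ sign_cond x x' g.

Definition in_conv_hull (T : finType) (R : realFieldType) (n : nat)
  (s : 'I_n -> T -> R) (f : T -> R) : Prop :=
  exists w : 'I_n -> R, (forall i, 0 <= w i) /\ \sum_(i < n) w i = 1 /\
    forall t, f t = \sum_(i < n) w i * s i t.

Definition is_convex_polytope (T : finType) (R : realFieldType) (C : (T -> R) -> Prop) : Prop :=
  exists (n : nat) (s : 'I_n -> T -> R), forall f, C f <-> in_conv_hull s f.

Definition extreme_point (T : finType) (R : realFieldType) (C : (T -> R) -> Prop)
  (f : T -> R) : Prop :=
  C f /\ forall (g h : T -> R) (t : R), C g -> C h -> 0 < t < 1 ->
    (forall u, f u = t * g u + (1 - t) * h u) -> forall u, g u = f u /\ h u = f u.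

(* Plan of the file.
   - Lattice facts: join-irreducibles of a finite distributive lattice are join-prime, so
     eta(x) and eta(x') cover J(L).  Hence, on C, |f j| = side j * f j with side j = +-1,
     and all constraints of C become linear: C is convex.
   - Elementary convexity facts: faces of an interval under a strict convex combination,
     vertices and convexity of a convex hull.
   - Peeling: if a > 0 is the smallest nonzero value of |f| and a < 1, then
     f = a * sg f + (1 - a) * f' with f' in C of strictly smaller support, while sg f is
     always in D.  Induction on the support shows C = conv(D); the same decomposition
     shows that extreme points lie in D, and a coordinatewise face argument shows that
     every point of D is extreme. *)

From HB Require Import structures.
From mathcomp Require Import all_boot all_order all_algebra.
From mathcomp Require Import ring.
From Stdlib Require Import ClassicalEpsilon FunctionalExtensionality.
Import Order.TTheory GRing.Theory Num.Theory.
Set Implicit Arguments. Unset Strict Implicit. Unset Printing Implicit Defensive.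

Lemma exists_lower_cover (d : Order.disp_t) (L : finPOrderType d) (y j : L) :
  (y < j)%O -> exists2 z : L, covers z j & (y <= z)%O.
Proof.
move: {2}#|_| (leqnn #|[pred w : L | (y < w)%O && (w < j)%O]|) => n.
elim: n y => [|n IH] y Hn Hyj.
  exists y; rewrite /covers ?lexx // Hyj /=; apply/forallP => z; apply/negP => Hz.
  by move: Hn; rewrite leqn0 => /eqP/card0_eq/(_ z); rewrite inE Hz.
case: (boolP [exists w, (y < w)%O && (w < j)%O]) => [/existsP[w /andP[Hyw Hwj]]|Hnone].
  have [|z Hz Hwz] := IH w _ Hwj; last by exists z; rewrite // (le_trans (ltW Hyw) Hwz).
  rewrite -ltnS; apply: leq_trans Hn; apply: proper_card; apply/properP; split.
    by apply/subsetP => u; rewrite !inE => /andP[Hwu ->]; rewrite (lt_trans Hyw Hwu).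
  by exists w; rewrite !inE ?Hyw ?Hwj ?ltxx.
exists y; rewrite /covers ?lexx // Hyj /=; apply/forallP => z.
by apply/negP => Hz; move/negP: Hnone; apply; apply/existsP; exists z.
Qed.

(* In a finite distributive lattice a join-irreducible element is join-prime: its unique
   lower cover bounds both j `&` a and j `&` b, hence j `&` (a `|` b) if j <= a `|` b. *)
Lemma join_irr_prime (d : Order.disp_t) (L : finDistrLatticeType d) (j a b : L) :
  join_irr j -> (j <= a `|` b)%O -> (j <= a)%O || (j <= b)%O.
Proof.
move=> Hj Hab; apply/negPn/negP; rewrite negb_or => /andP[Ha Hb].
have meet_lt c : ~~ (j <= c)%O -> (j `&` c < j)%O.
  by move=> Hc; rewrite lt_neqAle leIl andbT; apply: contra Hc => /eqP <-; rewrite leIr.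
have [z1 Hz1 H1] := exists_lower_cover (meet_lt _ Ha).
have [z2 Hz2 H2] := exists_lower_cover (meet_lt _ Hb).
have z12 : z1 = z2.
  by move: Hj => /eqP/(@eq_leq _ 1) /card_le1_eqP; apply; rewrite inE.
have : (j <= z1)%O by rewrite -(meet_idPl Hab) meetUr leUx H1 z12 H2.
by case/andP: Hz1 => Hz1 _ /(lt_le_trans Hz1); rewrite ltxx.
Qed.

Lemma below_x_or_complement (d : Order.disp_t) (L : finTBDistrLatticeType d) (x x' : L)
  (hx : complement_of x x') (j : JL L) : (val j <= x)%O || (val j <= x')%O.
Proof. by apply: join_irr_prime; [exact: valP | case: hx => _ ->; apply: lex1]. Qed.

Local Open Scope ring_scope.

Lemma convex_face (R : realFieldType) (t c p q : R) : 0 < t < 1 -> p <= c -> q <= c ->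
  t * p + (1 - t) * q = c -> p = c /\ q = c.
Proof.
case/andP=> t0 t1 pc qc Hc; have t1' : 0 < 1 - t by rewrite subr_gt0.
have : t * (c - p) + (1 - t) * (c - q) == 0.
  by apply/eqP; rewrite -Hc; ring.
rewrite paddr_eq0 ?mulr_ge0 ?subr_ge0 ?(ltW t0) ?(ltW t1) //.
by rewrite !mulf_eq0 (gt_eqF t0) (gt_eqF t1') /= !subr_eq0 => /andP[/eqP <- /eqP <-].
Qed.

Lemma convex_face_ge (R : realFieldType) (t c p q : R) : 0 < t < 1 -> c <= p -> c <= q ->
  t * p + (1 - t) * q = c -> p = c /\ q = c.
Proof.
move=> Ht cp cq Hc; have [] := @convex_face _ t (- c) (- p) (- q) Ht.
- by rewrite lerN2.
- by rewrite lerN2.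
- by rewrite !mulrN -opprD Hc.
by move=> /oppr_inj -> /oppr_inj ->.
Qed.

Lemma conv_hull_vertex (T : finType) (R : realFieldType) n (s : 'I_n -> T -> R) i0 :
  in_conv_hull s (s i0).
Proof.
exists (fun i => (i == i0)%:R); split=> [i|]; first exact: ler0n.
split=> [|t]; first by rewrite (bigD1 i0) //= eqxx big1 ?addr0 // => i /negbTE ->.
by rewrite (bigD1 i0) //= eqxx mul1r big1 ?addr0 // => i /negbTE ->; rewrite mul0r.
Qed.

Lemma conv_hull_convex (T : finType) (R : realFieldType) n (s : 'I_n -> T -> R)
  (g h : T -> R) (a : R) : in_conv_hull s g -> in_conv_hull s h -> 0 <= a <= 1 ->
  in_conv_hull s (fun t => a * g t + (1 - a) * h t).
Proof.
move=> [wg [wg0 [wg1 Hg]]] [wh [wh0 [wh1 Hh]]] /andP[a0 a1].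
exists (fun i => a * wg i + (1 - a) * wh i); split; [|split].
- by move=> i; rewrite addr_ge0 ?mulr_ge0 ?subr_ge0.
- by rewrite big_split /= -!mulr_sumr wg1 wh1 !mulr1 addrC subrK.
- move=> t; rewrite Hg Hh !mulr_sumr -big_split /=; apply: eq_bigr => i _.
  by rewrite [RHS]mulrDl !mulrA.
Qed.

Section SignedPolytope.
Variables (R : realFieldType) (d : Order.disp_t) (L : finTBDistrLatticeType d) (x x' : L).
Hypothesis hx : complement_of x x'.
Local Notation J := (JL L).
Local Notation C := (fun g : J -> R => in_Cx x x' g).
Local Notation D := (fun g : J -> R => in_Dx x x' g).

Definition side (j : J) : R := if (val j <= x)%O then 1 else -1.

Lemma norm_side (g : J -> R) : sign_cond x x' g -> forall j, `|g j| = side j * g j.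
Proof.
case=> Hpos Hneg j; rewrite /side; case: ifP => Hj; first by rewrite mul1r ger0_norm ?Hpos.
by have := below_x_or_complement hx j; rewrite Hj /= => /Hneg Hj'; rewrite mulN1r ler0_norm.
Qed.

Lemma D_sub_C (g : J -> R) : D g -> C g.
Proof.
case=> Hv HC; split=> // j; case: (Hv j) => [->|[->|->]];
  by rewrite ?lexx ?lerN10 ?ler01 // (le_trans (lerN10 _) ler01).
Qed.

(* C is convex: it contains the convex hull of any finite family of its points.
   The constraints of C are linear once |.| is replaced by side * (.). *)
Lemma conv_hull_C n (s : 'I_n -> J -> R) (f : J -> R) :
  (forall i, C (s i)) -> in_conv_hull s f -> C f.
Proof.
move=> Hs [w [w0 [w1 Hf]]].
have Hsign : sign_cond x x' f.
  split=> j Hj; rewrite Hf.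
    by apply: sumr_ge0 => i _; rewrite mulr_ge0 // (Hs i).2.2.1.
  by apply: sumr_le0 => i _; rewrite mulr_ge0_le0 // (Hs i).2.2.2.
have Hbound j i : -1 <= s i j <= 1 by exact: (Hs i).1.
split; last split => //.
- move=> j; rewrite Hf -w1 -sumrN; apply/andP; split; apply: ler_sum => i _.
    by rewrite -mulrN1 ler_wpM2l //; case/andP: (Hbound j i).
  by rewrite -{2}(mulr1 (w i)) ler_wpM2l //; case/andP: (Hbound j i).
- move=> j j' Hjj'; rewrite !(norm_side Hsign) !Hf !mulr_sumr; apply: ler_sum => i _.
  rewrite (mulrCA (side j)) (mulrCA (side j')) -!(norm_side (Hs i).2.2).
  by rewrite ler_wpM2l // (Hs i).2.1.
Qed.

Lemma zero_D : D (fun _ => 0).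
Proof. by split=> [j|]; [right; left | split=> [j j' _|]; rewrite ?normr0 //; split]. Qed.

Lemma sign_pattern_D (f : J -> R) : C f -> D (fun j => Num.sg (f j)).
Proof.
case=> _ [Hnonincr [Hpos Hneg]]; split; [|split; [|split]].
- move=> j; case: (ltrgtP (f j) 0) => Hj; [left; rewrite ltr0_sg //|
    right; right; rewrite gtr0_sg //| right; left; rewrite Hj sgr0 //].
- move=> j j' Hjj'; rewrite !normr_sg; have := Hnonincr j j' Hjj'.
  case: (f j =P 0) => [->|_]; last by case: (f j' != 0) => //= _; rewrite ler01.
  by rewrite normr0 normr_le0 => /eqP ->; rewrite eqxx.
- by move=> j /Hpos; rewrite sgr_ge0.
- by move=> j /Hneg; rewrite sgr_le0.
Qed.

(* D is finite: its points are among the maps j |-> phi j - 1 with phi : J -> 'I_3.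
   We list them, replacing the codes that do not give a point of D by 0. *)
Definition ternary (phi : {ffun J -> 'I_3}) (j : J) : R := (phi j)%:R - 1.

Definition D_point (phi : {ffun J -> 'I_3}) : J -> R :=
  if excluded_middle_informative (D (ternary phi)) then ternary phi else (fun _ => 0).

Definition D_points (i : 'I_#|{ffun J -> 'I_3}|) : J -> R := D_point (enum_val i).

Lemma D_points_D i : D (D_points i).
Proof. rewrite /D_points /D_point; case: excluded_middle_informative => // ?; exact: zero_D. Qed.

Lemma D_in_D_points (g : J -> R) : D g -> exists i, D_points i = g.
Proof.
move=> Hg; pose code (v : R) : nat := if v == -1 then 0%N else if v == 0 then 1%N else 2%N.
pose phi : {ffun J -> 'I_3} := [ffun j => inord (code (g j))].
have Hphi : ternary phi = g.
  apply: functional_extensionality => j; rewrite /ternary ffunE /code.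
  have n1 : (1 : R) == -1 = false by rewrite gt_eqF // (lt_trans (ltrN10 _) ltr01).
  have n0 : (0 : R) == -1 = false by rewrite gt_eqF // ltrN10.
  case: (Hg.1 j) => [->|[->|->]]; rewrite ?eqxx ?n0 ?n1 ?oner_eq0 inordK //.
  - by rewrite sub0r.
  - by rewrite subrr.
  - by rewrite (natrD _ 1 1) addrK.
exists (enum_rank phi); rewrite /D_points enum_rankK /D_point Hphi.
by case: excluded_middle_informative.
Qed.

Definition peel (a : R) (f : J -> R) (j : J) : R := (f j - a * Num.sg (f j)) / (1 - a).

Lemma peel_sg (a : R) (f : J -> R) (j : J) :
  peel a f j = Num.sg (f j) * ((`|f j| - a) / (1 - a)).
Proof. by rewrite /peel mulrA mulrBr -numEsg [a * _]mulrC. Qed.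

Lemma peel_combination (a : R) (f : J -> R) (j : J) : a < 1 ->
  f j = a * Num.sg (f j) + (1 - a) * peel a f j.
Proof.
move=> a1; have a1' : 1 - a != 0 by rewrite subr_eq0 gt_eqF.
by rewrite /peel mulrCA mulfV // mulr1 addrC subrK.
Qed.

Lemma peel_C (a : R) (f : J -> R) : C f -> 0 < a < 1 ->
  (forall j, f j != 0 -> a <= `|f j|) -> C (peel a f).
Proof.
case=> Hb [Hnonincr [Hpos Hneg]] /andP[a0 a1] Hmin.
have b0 : 0 < 1 - a by rewrite subr_gt0.
have ratio01 j : f j != 0 -> 0 <= (`|f j| - a) / (1 - a) <= 1.
  move=> Hj; apply/andP; split; first by rewrite divr_ge0 ?subr_ge0 ?Hmin ?ltW.
  by rewrite ler_pdivrMr // mul1r lerB // ler_norml Hb.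
have peel0 j : f j = 0 -> peel a f j = 0 by move=> H0; rewrite peel_sg H0 sgr0 mul0r.
split; [|split; [|split]] => [j|j j' Hjj'|j Hj|j Hj].
- case: (f j =P 0) => [/peel0 ->|/eqP Hf0]; first by rewrite lerN10 ler01.
  have /andP[r0 r1] := ratio01 _ Hf0.
  by rewrite -ler_norml peel_sg normrM (ger0_norm r0) normr_sg Hf0 mul1r.
- case: (f j' =P 0) => [/peel0 ->|/eqP Hj']; first by rewrite normr0 normr_ge0.
  have Hj : f j != 0 by rewrite -normr_gt0 (lt_le_trans _ (Hnonincr _ _ Hjj')) ?normr_gt0.
  have /andP[r0 _] := ratio01 _ Hj; have /andP[r0' _] := ratio01 _ Hj'.
  rewrite !peel_sg !(normrM (Num.sg _)) !normr_sg Hj Hj' !mul1r (ger0_norm r0) (ger0_norm r0').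
  by apply: ler_wpM2r; [rewrite invr_ge0 ltW | rewrite lerB ?Hnonincr].
- case: (f j =P 0) => [/peel0 -> //|/eqP /ratio01 /andP[r0 _]].
  by rewrite peel_sg mulr_ge0 ?sgr_ge0 ?Hpos.
- case: (f j =P 0) => [/peel0 -> //|/eqP /ratio01 /andP[r0 _]].
  by rewrite peel_sg mulr_le0_ge0 ?sgr_le0 ?Hneg.
Qed.

Definition support (f : J -> R) : nat := #|[pred j | f j != 0]|.

(* Every point of C either equals its sign pattern, or is a proper convex combination
   of its sign pattern and a point of C with strictly smaller support: peel off the
   smallest nonzero absolute value a. *)
Lemma C_decomposition (f : J -> R) : C f ->
  (forall j, f j = Num.sg (f j)) \/
  exists2 a, 0 < a < 1 & [/\ C (peel a f),
    forall j, f j = a * Num.sg (f j) + (1 - a) * peel a f j &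
    (support (peel a f) < support f)%N].
Proof.
move=> Hf; have Hle1 j : `|f j| <= 1 by rewrite ler_norml Hf.1.
case: (pickP (fun j => f j != 0)) => [j1 Hj1|Hzero]; last first.
  by left=> j; move/negbFE/eqP: (Hzero j) => ->; rewrite sgr0.
have [j0 Hj0 Hmin] := @arg_minP _ _ _ j1 (fun j => f j != 0) (fun j => `|f j|) Hj1.
have a0 : 0 < `|f j0| by rewrite normr_gt0.
case: (`|f j0| =P 1) => [a1|/eqP a1].
  left=> j; case: (f j =P 0) => [->|/eqP Hj]; first by rewrite sgr0.
  have {}Hj : `|f j| = 1 by apply: le_anti; rewrite Hle1 -a1 Hmin.
  by rewrite [LHS]numEsg Hj mulr1.
have a01 : 0 < `|f j0| < 1 by rewrite a0 lt_neqAle a1 Hle1.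
right; exists `|f j0| => //; split=> [|j|]; first exact: peel_C.
  by apply: peel_combination; case/andP: a01.
apply: proper_card; apply/properP; split.
  apply/subsetP => j; rewrite !inE; apply: contra => /eqP Hj.
  by rewrite peel_sg Hj sgr0 mul0r.
exists j0; first by rewrite inE.
by rewrite inE negbK peel_sg subrr mul0r mulr0 eqxx.
Qed.

Lemma C_conv_hull (f : J -> R) : C f <-> in_conv_hull D_points f.
Proof.
split; last by apply: conv_hull_C => i; apply/D_sub_C/D_points_D.
have D_hull g : D g -> in_conv_hull D_points g.
  by case/D_in_D_points => i <-; exact: conv_hull_vertex.
have sign_hull g : C g -> in_conv_hull D_points (fun j => Num.sg (g j)).
  by move=> Hg; apply/D_hull/sign_pattern_D.
move: {2}(support f) (leqnn (support f)) => n.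
elim: n f => [|n IH] f Hn Hf; case: (C_decomposition Hf) => [Hsg|[a a01 [Hp Hcomb Hsupp]]].
- by rewrite (functional_extensionality _ _ Hsg); exact: sign_hull.
- by move: (leq_trans Hsupp Hn).
- by rewrite (functional_extensionality _ _ Hsg); exact: sign_hull.
rewrite (functional_extensionality _ _ Hcomb); apply: conv_hull_convex.
- exact: sign_hull.
- by apply: IH Hp; rewrite -ltnS (leq_trans Hsupp Hn).
- by case/andP: a01 => a0 a1; rewrite !ltW.
Qed.

(* A point of D is extreme in C: coordinatewise, 1 and -1 are faces of [-1, 1], and
   0 is a face of the half-line allowed by the sign condition. *)
Lemma D_extreme (g : J -> R) : D g -> extreme_point C g.
Proof.
move=> Hg; split; first exact: D_sub_C.
move=> g1 g2 t [b1 [_ [pos1 neg1]]] [b2 [_ [pos2 neg2]]] Ht Hcomb u.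
have /andP[g1l g1u] := b1 u; have /andP[g2l g2u] := b2 u.
have {}Hcomb := esym (Hcomb u).
case: (Hg.1 u) => Hu; last case: Hu => Hu; rewrite Hu in Hcomb *.
- exact: convex_face_ge Ht g1l g2l Hcomb.
- case/orP: (below_x_or_complement hx u) => Hux.
    exact: convex_face_ge Ht (pos1 _ Hux) (pos2 _ Hux) Hcomb.
  exact: convex_face Ht (neg1 _ Hux) (neg2 _ Hux) Hcomb.
- exact: convex_face Ht g1u g2u Hcomb.
Qed.

Lemma extreme_D (g : J -> R) : extreme_point C g -> D g.
Proof.
case=> Hg Hext; suff Hsg : forall j, g j = Num.sg (g j).
  by rewrite (functional_extensionality _ _ Hsg); exact: sign_pattern_D.
case: (C_decomposition Hg) => [//|[a a01 [Hp Hcomb _]] j].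
exact: esym (Hext _ _ _ (D_sub_C (sign_pattern_D Hg)) Hp a01 Hcomb j).1.
Qed.
End SignedPolytope.

Theorem mainTheorem5 (R : realFieldType) (d : Order.disp_t)
  (L : finTBDistrLatticeType d) (x x' : L) (hx : complement_of x x') :
  is_convex_polytope (fun g : JL L -> R => in_Cx x x' g) /\
  (forall g : JL L -> R,
     extreme_point (fun h : JL L -> R => in_Cx x x' h) g <-> in_Dx x x' g).
Proof.
split; first by exists _, (D_points R x x'); exact: C_conv_hull.
by move=> g; split; [exact: extreme_D | exact: D_extreme].
Qed.
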